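(* For positive integers $x$ and $y$, $$\binom{y}{2} + \binom{\lceil 2x/y \rceil}{2} < x + y - 1$$ holds if and only if either $y = 2$ and $x \in \{1,2\}$, or $y = 3$ and $x = 3$.
   Context: $\binom{m}{2} = m(m-1)/2$ for a nonnegative integer $m$, and $\lceil \cdot \rceil$ is the ceiling function. *)

From mathcomp Require Import all_boot.
Set Implicit Arguments. Unset Strict Implicit. Unset Printing Implicit Defensive.

Definition ceil_div (a b : nat) : nat := (a + b.-1) %/ b.

(* Write c = ceil(2x/y), so that 2x <= c y < 2x + y. Doubling the inequality
   and using 2x <= c y leaves y^2 + c^2 + 2 < c y + 3 y + c, a positive
   definite quadratic condition that forces y, c <= 4; the remaining cases
   are checked one by one. *)

From mathcomp Require Import all_boot.
From mathcomp Require Import zify.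
From Stdlib Require Import ZArith Lia.

Lemma mul2_bin2 n : 2 * 'C(n, 2) = n * n.-1.
Proof. by rewrite -mul_bin_diag bin1. Qed.

Lemma ceil_div_ge a b : 0 < b -> a <= ceil_div a b * b.
Proof.
move=> b_gt0; have := ltn_ceil (a + b.-1) b_gt0.
rewrite /ceil_div mulSn; set q := _ %/ b; lia.
Qed.

Lemma ceil_div_lt a b : 0 < b -> ceil_div a b * b < a + b.
Proof.
move=> b_gt0; apply: leq_ltn_trans (leq_divM _ _) _.
by rewrite ltn_add2l prednK.
Qed.

Lemma quadratic_lt_bounds y c :
  y * y.-1 + c * c.-1 + 2 < c * y + 2 * y -> y <= 4 /\ c <= 4.
Proof.
move=> lt_q.
(* Completing squares in the positive definite form y^2 + c^2 - c y. *)
have := Z.square_nonneg (2 * Z.of_nat c - Z.of_nat y - 1)%Z.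
have := Z.square_nonneg (2 * Z.of_nat y - Z.of_nat c - 3)%Z.
nia.
Qed.

Theorem lemma2 (x y : nat) (hx : 0 < x) (hy : 0 < y) :
  'C(y, 2) + 'C(ceil_div (2 * x) y, 2) < x + y - 1
  <-> (y = 2 /\ (x = 1 \/ x = 2)) \/ (y = 3 /\ x = 3).
Proof.
split; last by case=> [[-> [->|->]]|[-> ->]].
set c := ceil_div (2 * x) y => lt_bin.
have c_ge : 2 * x <= c * y := ceil_div_ge _ _ hy.
have c_lt : c * y < 2 * x + y := ceil_div_lt _ _ hy.
have lt_dbl : y * y.-1 + c * c.-1 < 2 * (x + y - 1).
  by have := mul2_bin2 y; have := mul2_bin2 c; lia.
have [y_le4 c_le4] : y <= 4 /\ c <= 4.
  by apply: quadratic_lt_bounds; lia.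
clearbody c; clear lt_bin; move: c_ge c_lt lt_dbl.
by case: y hy y_le4 => [|[|[|[|[|y]]]]] //= _ _;
  case: c c_le4 => [|[|[|[|[|c]]]]] //= _; lia.
Qed.
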